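(* Let $N\ge 2$, $d\ge 1$, and consider the system $$\dot x_i(t)=\frac{1}{N}\sum_{j=1}^N M_{ij}(t)\,(x_j(t)-x_i(t)),\qquad i=1,\dots,N,$$ with $x_i(t)\in\mathbb{R}^d$, where all weights $M_{ij}:[0,+\infty)\to[0,1]$ are Lebesgue measurable, and let $x(t)=(x_1(t),\dots,x_N(t))$ be a solution (in the Carathéodory sense). Fix $T,\mu>0$ and let $G(t)$ be the $(T,\mu)$-connectivity graph associated to the $M_{ij}$. Assume that there exists a constant directed graph $G^*$ on the nodes $\{1,\dots,N\}$ such that all arrows of $G^*$ are arrows of $G(kT)$ for every $k\in\mathbb{N}$, that $G^*$ admits a globally reachable node $I$, and let $d^*:=d(G^*,I)$ be its length to $I$. Set $\tau=d^*T$ and $$C=1-\frac12\left(\frac{\mu T}{N+\mu T}\right)^{d^*}\exp(-2d^*T).$$ Then for all $n\in\mathbb{N}$, $$\max_{i,j}|x_i(n\tau)-x_j(n\tau)|\le C^n\max_{i,j}|x_i(0)-x_j(0)|.$$ Moreover, for all $t\in[0,\tau]$ and $n\in\mathbb{N}$, $$\max_{i,j}|x_i(n\tau+t)-x_j(n\tau+t)|\le \varphi(t)\,C^n\max_{i,j}|x_i(0)-x_j(0)|,$$ where $\delta:=-\frac{N}{2(N-1)}\log(C)$ and $$\varphi(t)=\begin{cases}1 & t\in[0,\tau-\delta],\\ C\exp\!\left(2\frac{N-1}{N}(\tau-t)\right) & t\in[\tau-\delta,\tau].\end{cases}$$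
   Context: $|\cdot|$ is the Euclidean norm. Given $T,\mu>0$ and functions $M_{ij}:[0,+\infty)\to[0,1]$, the $(T,\mu)$-connectivity graph at time $t\ge 0$ is the directed graph $G(t)$ with node set $\{1,\dots,N\}$ in which the arrow $i\to j$ exists iff $\frac1T\int_t^{t+T}M_{ij}(s)\,ds\ge\mu$. A node $I$ of a directed graph $G$ is globally reachable if from every node there is a directed path to $I$. For such $I$, $d(i,I)$ is the minimal number of arrows of a directed path $i\to j_1\to\dots\to j_n=I$ in $G$, and the length of $G$ to $I$ is $d(G,I):=\max_{i} d(i,I)$. $\mathbb{N}$ includes $0$. *)

From HB Require Import structures.
From mathcomp Require Import all_boot all_order all_algebra.
From mathcomp Require Import all_classical all_reals all_analysis.
Set Implicit Arguments. Unset Strict Implicit. Unset Printing Implicit Defensive.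
Import Order.TTheory GRing.Theory Num.Theory.
Import numFieldNormedType.Exports.
Local Open Scope classical_set_scope.
Local Open Scope ring_scope.

Definition enorm (R : realType) (d : nat) (v : 'rV[R]_d) : R :=
  Num.sqrt (\sum_(k < d) (v ord0 k) ^+ 2).

Definition diam (R : realType) (N d : nat) (x : 'I_N -> R -> 'rV[R]_d) (t : R) : R :=
  \big[Num.max/0]_(i < N) \big[Num.max/0]_(j < N) enorm (x i t - x j t).

(* Caratheodory solution of
   x_i' = 1/N sum_j M_ij (x_j - x_i), on [0,+oo), in integral form:
   the right-hand side is integrable on every [0,t] and x is its primitive. *)
Definition is_solution (R : realType) (N d : nat) (M : 'I_N -> 'I_N -> R -> R)
    (x : 'I_N -> R -> 'rV[R]_d) : Prop :=
  forall (i : 'I_N) (k : 'I_d) (t : R), 0 <= t ->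
    let f := fun s : R => (N%:R)^-1 * \sum_(j < N) M i j s * ((x j s) ord0 k - (x i s) ord0 k) in
    (@lebesgue_measure R).-integrable `[0, t] (EFin \o f) /\
    (x i t) ord0 k = (x i 0) ord0 k + \int[@lebesgue_measure R]_(s in `[0, t]) f s.

Definition conn_arrow (R : realType) (N : nat) (M : 'I_N -> 'I_N -> R -> R)
    (T mu t : R) (i j : 'I_N) : Prop :=
  T^-1 * (\int[@lebesgue_measure R]_(s in `[t, t + T]) M i j s) >= mu.

Fixpoint reachn (N : nat) (e : rel 'I_N) (n : nat) (i I : 'I_N) : bool :=
  match n with
  | 0 => i == I
  | n'.+1 => [exists j, e i j && reachn e n' j I]
  end.

Definition globally_reachable (N : nat) (e : rel 'I_N) (I : 'I_N) : Prop :=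
  forall i, exists n, reachn e n i I.

Definition is_dist (N : nat) (e : rel 'I_N) (i I : 'I_N) (n : nat) : Prop :=
  reachn e n i I /\ forall m, (m < n)%N -> ~~ reachn e m i I.

Definition is_length (N : nat) (e : rel 'I_N) (I : 'I_N) (L : nat) : Prop :=
  (forall i, exists n, is_dist e i I n /\ (n <= L)%N) /\
  (exists i, is_dist e i I L).

(* Everything reduces to scalar solutions: for a direction [v], the projections
   [y_l = <v, x_l>] solve the same linear system, and by Cauchy-Schwarz the
   diameter of [x] is controlled by the spread [max y - min y] of these
   projections.  For a scalar solution nonnegativity is invariant, hence the
   spread never increases; moreover a nonnegative solution satisfies
   [z_l' >= M_lj z_j / N - z_l], so by Gronwall a lower bound at [j] is passed
   to [l] across one window of length [T] along every arrow [l -> j] of [G*],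
   at the cost of a factor [(mu T / N) e^(-2T)].  Starting from the globally
   reachable node [I], where [hi - y] or [y - lo] is at least half the spread,
   after [d*] windows every coordinate has left one of the extremes by a
   fraction [a^d* e^(-2 d* T) / 2] of the spread, where
   [a = mu T / (N + mu T) <= mu T / N]: the spread contracts by [C] over each
   period [tau].  Inside a period the spread does not increase, and
   it cannot decay faster than [e^(-2 (N - 1) t / N)], which gives [phi]. *)

From HB Require Import structures.
From mathcomp Require Import all_boot all_order all_algebra.
From mathcomp Require Import all_classical all_reals all_analysis.
From mathcomp Require Import ring lra.
Import Order.TTheory GRing.Theory Num.Theory.
Import numFieldNormedType.Exports.
Local Open Scope classical_set_scope.
Local Open Scope ring_scope.

(** * Calculus on compact intervals *)

Section interval_calculus.
Context {R : realType}.
Local Notation mu := (@lebesgue_measure R).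
Implicit Types (a b c k r s : R) (f g : R -> R).

Lemma subset_itv_cc a b c r : a <= c -> r <= b -> `[c, r] `<=` `[a, b].
Proof. by move=> ac rb; apply: subset_itv; rewrite bnd_simp. Qed.

Lemma within_continuous_itvS f a b c r : {within `[a, b], continuous f} ->
  a <= c -> r <= b -> {within `[c, r], continuous f}.
Proof. by move=> cf ac rb; apply: continuous_subspaceW cf; exact: subset_itv_cc. Qed.

Lemma continuous_integrable_itv f a b : {within `[a, b], continuous f} ->
  mu.-integrable `[a, b] (EFin \o f).
Proof. by move=> cf; apply: continuous_compact_integrable => //; exact: segment_compact. Qed.

Lemma integrableZl_EFin (D : set R) f c : measurable D ->
  mu.-integrable D (EFin \o f) -> mu.-integrable D (EFin \o (fun u => c * f u)).
Proof.
move=> mD if_.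
have -> : EFin \o (fun u => c * f u) = (fun u => c%:E * (EFin \o f) u)%E.
  by apply/funext => u /=; rewrite EFinM.
exact: integrableZl.
Qed.

Lemma integrableB_EFin (D : set R) f g : measurable D ->
  mu.-integrable D (EFin \o f) -> mu.-integrable D (EFin \o g) ->
  mu.-integrable D (EFin \o (fun u => f u - g u)).
Proof.
move=> mD if_ ig.
have -> : EFin \o (fun u => f u - g u) = ((EFin \o f) \- (EFin \o g))%E.
  by apply/funext => u /=; rewrite EFinB.
exact: integrableB.
Qed.

Lemma Rintegral_itv_cst a b c : a <= b -> \int[mu]_(u in `[a, b]) c = c * (b - a).
Proof.
move=> ab; rewrite Rintegral_cst //= lebesgue_measure_itv /= lte_fin.
case: ltP => [_|ba]; first by rewrite -EFinD.
have -> : a = b by apply/le_anti; rewrite ab ba.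
by rewrite subrr mulr0.
Qed.

Lemma Rintegral_itv_split g a b c : a <= b -> b <= c ->
  mu.-integrable `[a, c] (EFin \o g) ->
  \int[mu]_(u in `[a, c]) g u - \int[mu]_(u in `[a, b]) g u = \int[mu]_(u in `[b, c]) g u.
Proof.
move=> ab bc ig.
rewrite (@Rintegral_itvB _ g (BLeft a) (BRight c) b) ?bnd_simp //.
rewrite Rintegral_itv_obnd_cbnd //.
by apply: integrableS ig => //; apply: subset_itv; rewrite bnd_simp.
Qed.

Lemma continuous_expR_scale k s : continuous (fun u : R => expR (k * (s - u))).
Proof.
move=> u; apply: continuous_comp; last exact: continuous_expR.
by apply: cvgM; [exact: cvg_cst | apply: cvgB; [exact: cvg_cst | exact: cvg_id]].
Qed.

Lemma Rintegral_expR_scale k s a b : 0 < k -> a <= b ->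
  \int[mu]_(u in `[a, b]) (k * expR (k * (s - u))) = expR (k * (s - a)) - expR (k * (s - b)).
Proof.
move=> k0; rewrite le_eqVlt => /predU1P[<-|ab].
  by rewrite set_itv1 Rintegral_set1 subrr.
have ce := continuous_expR_scale k s.
rewrite /Rintegral (@continuous_FTC2 _ _ (fun u => - expR (k * (s - u)))) //.
- by rewrite -EFinD /= opprK addrC.
- by apply: continuous_subspaceT => u; apply: cvgM; [exact: cvg_cst | exact: ce].
- split.
  + by move=> u _; exact: ex_derive.
  + by apply/cvg_at_right_filter; apply: cvgN; exact: ce.
  + by apply/cvg_at_left_filter; apply: cvgN; exact: ce.
- move=> u _.
  rewrite derive1_comp // derive1N // derive1_id mulN1r derive1_comp // derive1E.
  have /funeqP -> := @derive_expR R.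
  have -> : (fun x => k * (s - x))^`()%classic u = - k.
    rewrite derive1E deriveM // deriveB // !derive_cst derive_id.
    by rewrite scaler0 addr0 sub0r; exact: mulrN1.
  by rewrite mulrN opprK mulrC.
Qed.

End interval_calculus.
Arguments within_continuous_itvS {R f a b c r}.
Arguments continuous_integrable_itv {R f a b}.
Arguments integrableZl_EFin {R D f}.

Section comparison.
Context {R : realType}.
Local Notation mu := (@lebesgue_measure R).
Implicit Types (a b c k r s t : R) (f h z : R -> R).

Lemma ivt_last_root f a b : a <= b -> {within `[a, b], continuous f} ->
  0 <= f a -> f b < 0 ->
  exists s, [/\ a <= s, s <= b, f s = 0 & forall u, s <= u -> u <= b -> f u <= 0].
Proof.
move=> ab cf fa fb.
have root_in c r : a <= c -> c <= r -> r <= b -> 0 <= f c -> f r <= 0 ->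
    exists2 u, c <= u <= r & f u = 0.
  move=> ac cr rb fc fr.
  have [|u] := @IVT R f c r 0 cr (within_continuous_itvS cf ac rb).
    by rewrite ge_min fr le_max fc orbT.
  by rewrite in_itv /=; exists u.
pose Z := [set u | a <= u <= b /\ f u = 0].
have [c /andP[ac cb] fc] := root_in a b (lexx a) ab (lexx b) fa (ltW fb).
have Z_le_b : ubound Z b by move=> u [/andP[]].
have Zc : Z c by split => //; rewrite ac cb.
have hsZ : has_sup Z by split; [exists c | exists b].
set s := sup Z.
have cs : c <= s by apply: sup_upper_bound.
have sb : s <= b by apply: ge_sup => //; exists c.
have a_s : a <= s := le_trans ac cs.
have fs : f s = 0.
  apply/eqP; apply: contraT => fs0.
  have e0 : 0 < `|f s| by rewrite normr_gt0.
  have Is : [set` `[a, b]] s by rewrite /= in_itv /= a_s sb.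
  have := (subspace_continuousP _ f).1 cf s Is.
  move/cvgrPdist_lt => /(_ _ e0); rewrite near_withinE => /nbhs_ballP[d d0 near_s].
  have [u Zu su] := sup_adherent d0 hsZ.
  have us : u <= s by apply: sup_upper_bound.
  case: Zu => /andP[au ub] fu.
  have := near_s u; rewrite /ball /= fu subr0 ltxx; apply.
    by rewrite ger0_norm ?subr_ge0 //; move: su; rewrite -/s; lra.
  by rewrite /= in_itv /= au ub.
exists s; split => // u su ub.
rewrite leNgt; apply/negP => fu.
have [v /andP[uv vb] fv] := root_in u b (le_trans a_s su) ub (lexx b) (ltW fu) (ltW fb).
have vs : v <= s.
  by apply: sup_upper_bound => //; split => //; rewrite vb (le_trans a_s (le_trans su uv)).
by move: fu; rewrite (_ : u = v) ?fv ?ltxx //; apply/le_anti; rewrite uv (le_trans vs su).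
Qed.

Lemma Rintegral_expR_scale_nondecreasing k s a b c (H : R -> R) : 0 < k -> a <= b ->
  {within `[a, b], continuous H} -> (forall u, a <= u -> u <= b -> H u <= H b) ->
  \int[mu]_(u in `[a, b]) (k * expR (k * (s - u)) * (c + H u)) <=
    (expR (k * (s - a)) - expR (k * (s - b))) * (c + H b).
Proof.
move=> k0 ab cH Hb.
have ce : {within `[a, b], continuous (fun u => k * expR (k * (s - u)))}.
  apply: continuous_subspaceT => u.
  by apply: cvgM; [exact: cvg_cst | exact: continuous_expR_scale].
rewrite -Rintegral_expR_scale // -RintegralZr //; last exact: continuous_integrable_itv.
apply: le_Rintegral => //.
- apply: continuous_integrable_itv => u.
  by apply: cvgM; [exact: ce | apply: cvgD; [exact: cvg_cst | exact: cH]].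
- by apply: continuous_integrable_itv => u; apply: cvgM; [exact: ce | exact: cvg_cst].
move=> u /=; rewrite in_itv /= => /andP[au ub].
by apply: ler_wpM2l; [rewrite mulr_ge0 ?ltW ?expR_gt0 | rewrite lerD2l Hb].
Qed.

(* Integrated form of the comparison principle [z' >= h - k z] with [h >= 0]:
   [u |-> expR (k (s - u)) (z s + \int_s^u h)] is a subsolution starting at [z s]. *)
Lemma gronwall_lower k z h s t : 0 < k -> s <= t -> {within `[s, t], continuous z} ->
  (forall u, s <= u -> u <= t -> 0 <= h u) -> mu.-integrable `[s, t] (EFin \o h) ->
  (forall a r, s <= a -> a <= r -> r <= t ->
     \int[mu]_(u in `[a, r]) h u - k * \int[mu]_(u in `[a, r]) z u <= z r - z a) ->
  expR (k * (s - t)) * (z s + \int[mu]_(u in `[s, t]) h u) <= z t.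
Proof.
move=> k0 st cz h0 ih hz.
pose H u := \int[mu]_(v in `[s, u]) h v.
pose p u := expR (k * (s - u)) * (z s + H u).
have HB a r : s <= a -> a <= r -> r <= t -> H r - H a = \int[mu]_(u in `[a, r]) h u.
  move=> sa ar rt; apply: Rintegral_itv_split => //.
  by apply: integrableS ih => //; exact: subset_itv_cc.
have H_le a r : s <= a -> a <= r -> r <= t -> H a <= H r.
  move=> sa ar rt; rewrite -subr_ge0 HB //; apply: Rintegral_ge0 => u /=.
  by rewrite in_itv /= => /andP[au ur]; apply: h0; [exact: le_trans au | exact: le_trans rt].
have cH : {within `[s, t], continuous H} := parameterized_integral_continuous st ih.
have cp : {within `[s, t], continuous p}.
  move=> u; apply: cvgM; first exact: continuous_subspaceT (continuous_expR_scale k s) u.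
  by apply: cvgD; [exact: cvg_cst | exact: cH].
rewrite leNgt; apply/negP => zt_lt.
have [r [sr rt zr z_le]] : exists r, [/\ s <= r, r <= t, z r - p r = 0 &
    forall u, r <= u -> u <= t -> z u - p u <= 0].
  apply: ivt_last_root => //; last by rewrite subr_lt0.
    by move=> u; apply: cvgB; [exact: cz | exact: cp].
  by rewrite /p /H set_itv1 Rintegral_set1 subrr mulr0 expR0 mul1r addr0 subrr.
have crt : {within `[r, t], continuous p} := within_continuous_itvS cp sr (lexx t).
have int_h_p : \int[mu]_(u in `[r, t]) h u - k * \int[mu]_(u in `[r, t]) p u <= z t - z r.
  apply: le_trans (hz r t sr rt (lexx t)); rewrite lerD2l lerN2 ler_pM2l //.
  apply: le_Rintegral => //.
  - exact: continuous_integrable_itv (within_continuous_itvS cz sr (lexx t)).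
  - exact: continuous_integrable_itv.
  - by move=> u /=; rewrite in_itv /= => /andP[ru ut]; rewrite -subr_le0 z_le.
have int_p : k * \int[mu]_(u in `[r, t]) p u <=
    (expR (k * (s - r)) - expR (k * (s - t))) * (z s + H t).
  rewrite -RintegralZl //; last exact: continuous_integrable_itv.
  under eq_Rintegral do rewrite /p mulrA.
  apply: Rintegral_expR_scale_nondecreasing => //.
    exact: within_continuous_itvS cH sr (lexx t).
  by move=> u ru ut; apply: H_le => //; exact: le_trans ru.
have er1 : expR (k * (s - r)) <= 1 by rewrite expR_le1 pmulr_rle0 // subr_le0.
have HrHt := H_le r t sr rt (lexx t).
rewrite -HB // in int_h_p; rewrite -/(H t) in zt_lt; rewrite /p in zr.
have : 0 <= (H t - H r) * (1 - expR (k * (s - r))) by apply: mulr_ge0; rewrite subr_ge0.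
move: int_h_p int_p; set KI := k * _ => int_h_p int_p.
nra.
Qed.

End comparison.
Arguments ivt_last_root {R f a b}.

(** * Scalar solutions of the consensus system *)

Section argextremum.
Context {R : realDomainType} {n : nat}.

Lemma exists_argmin (F : 'I_n -> R) : (0 < n)%N -> exists i0, forall i, F i0 <= F i.
Proof.
move=> n0; case: (@arg_minP _ R _ (Ordinal n0) xpredT F erefl) => i _ H.
by exists i => j; exact: H.
Qed.

Lemma exists_argmax (F : 'I_n -> R) : (0 < n)%N -> exists i0, forall i, F i <= F i0.
Proof.
move=> n0; case: (@arg_maxP _ R _ (Ordinal n0) xpredT F erefl) => i _ H.
by exists i => j; exact: H.
Qed.

End argextremum.

Section spread.
Context {R : realType} {N : nat}.
Implicit Types (y : 'I_N -> R -> R) (u : R).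

Definition spread y u : R :=
  \big[Num.max/0]_(i < N) \big[Num.max/0]_(j < N) (y i u - y j u).

Lemma spread_ge y u i j : y i u - y j u <= spread y u.
Proof.
apply: le_trans (le_bigmax _ _ i).
exact: (le_bigmax _ (fun j => y i u - y j u) j).
Qed.

Lemma spread_le y u B : 0 <= B -> (forall i j, y i u - y j u <= B) -> spread y u <= B.
Proof. by move=> B0 yB; apply: bigmax_le => // i _; apply: bigmax_le => // j _. Qed.

Lemma spread_extremal y u imax imin : (forall i, y i u <= y imax u) ->
  (forall i, y imin u <= y i u) -> spread y u = y imax u - y imin u.
Proof.
move=> ymax ymin; apply/le_anti; rewrite spread_ge andbT.
apply: spread_le => [|i j]; first by rewrite subr_ge0.
exact: lerB.
Qed.

Lemma within_continuous_bigmax (A : set R) (I : Type) (s : seq I) (F : I -> R -> R) :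
  (forall i, {within A, continuous (F i)}) ->
  {within A, continuous (fun u => \big[Num.max/0]_(i <- s) F i u)}.
Proof.
move=> cF; elim: s => [|i s IH].
  by under eq_fun do rewrite big_nil; move=> x; exact: cvg_cst.
by under eq_fun do rewrite big_cons; move=> x; apply: continuous_max; [exact: cF | exact: IH].
Qed.

Lemma spread_continuous y (A : set R) : (forall i, {within A, continuous (y i)}) ->
  {within A, continuous (spread y)}.
Proof.
move=> cy; apply: within_continuous_bigmax => i; apply: within_continuous_bigmax => j.
by move=> x; apply: cvgB; [exact: cy | exact: cy].
Qed.

End spread.
Arguments spread_extremal {R N y u imax imin}.
Arguments spread_continuous {R N y A}.

Section scalar_consensus.
Context {R : realType} {N : nat} (M : 'I_N -> 'I_N -> R -> R).
Local Notation mu := (@lebesgue_measure R).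
Hypothesis N_gt0 : (0 < N)%N.
Hypothesis M_range : forall i j t, 0 <= t -> 0 <= M i j t <= 1.

Definition consensus_rhs (z : 'I_N -> R -> R) (i : 'I_N) (u : R) : R :=
  N%:R^-1 * \sum_(j < N) M i j u * (z j u - z i u).

Definition scalar_solution (z : 'I_N -> R -> R) : Prop :=
  forall i a b, 0 <= a -> a <= b ->
    mu.-integrable `[a, b] (EFin \o consensus_rhs z i) /\
    z i b - z i a = \int[mu]_(u in `[a, b]) consensus_rhs z i u.

Lemma scalar_solution_continuous z i a b : scalar_solution z -> 0 <= a -> a <= b ->
  {within `[a, b], continuous (z i)}.
Proof.
move=> hz a0 ab; have [ig _] := hz i a b a0 ab.
have cF := parameterized_integral_continuous ab ig.
have cG : {within `[a, b], continuous
    (fun u => z i a + \int[mu]_(v in `[a, u]) consensus_rhs z i v)}.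
  by move=> u; apply: cvgD; [exact: cvg_cst | exact: cF].
apply: subspace_eq_continuous cG => u; rewrite inE /= in_itv /= => /andP[au ub].
have [_ e] := hz i a u a0 au.
by rewrite /from_subspace /= -e addrC subrK.
Qed.
Arguments scalar_solution_continuous {z} i {a b}.

Lemma scalar_solution_of_primitive z :
  (forall i t, 0 <= t -> mu.-integrable `[0, t] (EFin \o consensus_rhs z i) /\
     z i t = z i 0 + \int[mu]_(u in `[0, t]) consensus_rhs z i u) ->
  scalar_solution z.
Proof.
move=> hz i a b a0 ab; have [ib eb] := hz i b (le_trans a0 ab).
split; first by apply: integrableS ib => //; exact: subset_itv_cc.
have [_ ea] := hz i a a0.
by rewrite eb ea opprD addrACA subrr add0r Rintegral_itv_split.
Qed.

Lemma consensus_rhs_affine z c d i u :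
  consensus_rhs (fun l v => c * z l v + d) i u = c * consensus_rhs z i u.
Proof.
rewrite /consensus_rhs mulrCA; congr (_ * _); rewrite mulr_sumr.
by apply: eq_bigr => l _; ring.
Qed.

Lemma scalar_solution_affine z c d : scalar_solution z ->
  scalar_solution (fun l v => c * z l v + d).
Proof.
move=> hz i a b a0 ab; have [ig e] := hz i a b a0 ab.
have -> : consensus_rhs (fun l v => c * z l v + d) i = fun u => c * consensus_rhs z i u.
  by apply/funext => u; exact: consensus_rhs_affine.
split; first exact: integrableZl_EFin.
by rewrite RintegralZl // -e; ring.
Qed.
Arguments scalar_solution_affine {z}.

Lemma consensus_rhs_ge_min z i u m : 0 <= u -> (forall l, m <= z l u) -> z i u <= 0 ->
  m <= 0 -> m <= consensus_rhs z i u.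
Proof.
move=> u0 zm zi0 m0.
have N0 : N%:R != 0 :> R by rewrite pnatr_eq0 -lt0n.
rewrite /consensus_rhs -[m](mulKf N0).
rewrite ler_wpM2l ?invr_ge0 ?ler0n //.
have -> : N%:R * m = \sum_(l < N) m by rewrite sumr_const card_ord mulr_natl.
apply: ler_sum => l _.
have /andP[M0 M1] := M_range i l u u0; have := zm l; nra.
Qed.

(* If [m < 0] is the minimum over a window of length [1/2], the drift of a
   nonpositive coordinate is at least [m], so starting from [0] it stays
   above [m/2] on the window and never attains [m]. *)
Lemma scalar_solution_nonneg_window z s : scalar_solution z -> 0 <= s ->
  (forall i, 0 <= z i s) -> forall t, s <= t -> t <= s + 2^-1 -> forall i, 0 <= z i t.
Proof.
move=> hz s0 zs t st ts.
set b := s + 2^-1.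
have sb : s <= b by rewrite /b lerDl.
have /fin_all_exists[c c_min] i : exists c, c \in `[s, b] /\
    forall u, u \in `[s, b] -> z i c <= z i u.
  have [c cab H] := EVT_min sb (scalar_solution_continuous i hz s0 sb).
  by exists c.
have [i0 i0_min] := exists_argmin (fun i => z i (c i)) N_gt0.
set m := z i0 (c i0).
have m_le l u : u \in `[s, b] -> m <= z l u.
  by move=> ub; exact: le_trans (i0_min l) ((c_min l).2 u ub).
suff m0 : 0 <= m by move=> i; apply: le_trans m0 (m_le i t _); rewrite in_itv /= st ts.
rewrite leNgt; apply/negP => m0.
have /andP[sc cb] : s <= c i0 <= b by have := (c_min i0).1; rewrite in_itv.
have [r [sr rc zr z_le]] := ivt_last_root sc
  (scalar_solution_continuous i0 hz s0 sc) (zs i0) m0.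
have [ig e] := hz i0 r (c i0) (le_trans s0 sr) rc.
have : m * (c i0 - r) <= m.
  rewrite -[X in _ <= X]subr0 -zr e -Rintegral_itv_cst //.
  apply: le_Rintegral => //; first exact: continuous_integrable_itv (fun x => cvg_cst m).
  move=> u /=; rewrite in_itv /= => /andP[ru uc].
  apply: consensus_rhs_ge_min (le_trans (le_trans s0 sr) ru) _ (z_le u ru uc) (ltW m0).
  by move=> l; apply: m_le; rewrite in_itv /= (le_trans sr ru) (le_trans uc cb).
have : c i0 - r <= 2^-1 by move: cb sr; rewrite /b; lra.
nra.
Qed.

Lemma scalar_solution_nonneg z s : scalar_solution z -> 0 <= s ->
  (forall i, 0 <= z i s) -> forall t, s <= t -> forall i, 0 <= z i t.
Proof.
move=> hz s0 zs.
suff H k : forall t, s <= t -> t <= s + k%:R * 2^-1 -> forall i, 0 <= z i t.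
  move=> t st; apply: (H (Num.bound (2 * (t - s)))) => //.
  have := @archi_boundP R (2 * (t - s)); rewrite mulr_ge0 ?subr_ge0 // => /(_ isT).
  by lra.
elim: k => [|k IH] t st tk.
  have -> : t = s by apply/le_anti; rewrite st andbT; move: tk; rewrite mul0r addr0.
  exact: zs.
have sk : s <= s + k%:R * 2^-1 by rewrite lerDl mulr_ge0.
case: (leP t (s + k%:R * 2^-1)) => tk'; first exact: IH.
apply: (@scalar_solution_nonneg_window z (s + k%:R * 2^-1)) => //.
- exact: le_trans sk.
- exact: IH.
- exact: ltW.
- by move: tk; rewrite -addn1 natrD; lra.
Qed.
Arguments scalar_solution_nonneg {z s}.

Lemma scalar_solution_le z s t B : scalar_solution z -> 0 <= s -> s <= t ->
  (forall l, z l s <= B) -> forall l, z l t <= B.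
Proof.
move=> hz s0 st zB l.
have := scalar_solution_nonneg (scalar_solution_affine (-1) B hz) s0 _ t st l.
rewrite mulN1r addrC subr_ge0; apply => m.
by rewrite mulN1r addrC subr_ge0.
Qed.

Lemma scalar_solution_ge z s t B : scalar_solution z -> 0 <= s -> s <= t ->
  (forall l, B <= z l s) -> forall l, B <= z l t.
Proof.
move=> hz s0 st zB l.
have := scalar_solution_nonneg (scalar_solution_affine 1 (- B) hz) s0 _ t st l.
rewrite mul1r subr_ge0; apply => m.
by rewrite mul1r subr_ge0.
Qed.
Arguments scalar_solution_le {z s t B}.
Arguments scalar_solution_ge {z s t B}.

Hypothesis M_meas : forall i j, measurable_fun (`[0%R, +oo[%classic : set R) (M i j).

Lemma integrable_weight l j a b : 0 <= a -> mu.-integrable `[a, b] (EFin \o M l j).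
Proof.
move=> a0; apply: measurable_bounded_integrable => //.
- by apply: compact_finite_measure; exact: segment_compact.
- apply: measurable_funS (M_meas l j) => //.
  by move=> u /=; rewrite !in_itv /= => /andP[au _]; rewrite andbT (le_trans a0 au).
- exists 1; split; rewrite ?num_real // => x x1 u /=; rewrite in_itv /= => /andP[au _].
  have /andP[M0 M1] := M_range l j u (le_trans a0 au).
  by rewrite ger0_norm // (le_trans M1) // ltW.
Qed.

Lemma consensus_rhs_ge_arrow z l j u c : 0 <= u -> (forall m, 0 <= z m u) ->
  0 <= c -> c <= z j u -> N%:R^-1 * (c * M l j u) - z l u <= consensus_rhs z l u.
Proof.
move=> u0 zu c0 cz.
have Ninv0 : 0 <= N%:R^-1 :> R by rewrite invr_ge0 ler0n.
have NNinv : N%:R^-1 * N%:R = 1 :> R by rewrite mulVf // pnatr_eq0 -lt0n.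
have split_rhs : consensus_rhs z l u =
    N%:R^-1 * \sum_(m < N) M l m u * z m u - N%:R^-1 * (\sum_(m < N) M l m u) * z l u.
  by rewrite /consensus_rhs -mulrA -mulrBr mulr_suml -sumrB; congr (_ * _);
    apply: eq_bigr => m _; ring.
have gain : c * M l j u <= \sum_(m < N) M l m u * z m u.
  rewrite (bigD1 j) //= mulrC -[X in X <= _]addr0 lerD ?ler_wpM2l //.
  - by have /andP[] := M_range l j u u0.
  - by apply: sumr_ge0 => m _; apply: mulr_ge0 => //; have /andP[] := M_range l m u u0.
have loss : \sum_(m < N) M l m u <= N%:R.
  have -> : N%:R = \sum_(m < N) (1 : R) by rewrite sumr_const card_ord.
  by apply: ler_sum => m _; have /andP[] := M_range l m u u0.
have : N%:R^-1 * (\sum_(m < N) M l m u) * z l u <= z l u.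
  apply: le_trans (_ : N%:R^-1 * N%:R * z l u <= z l u); last by rewrite NNinv mul1r.
  apply: ler_wpM2r; first exact: zu.
  by apply: ler_wpM2l.
rewrite split_rhs; have := ler_wpM2l Ninv0 gain; lra.
Qed.

Lemma scalar_solution_increment_ge z l j a r c : scalar_solution z -> 0 <= a -> a <= r ->
  (forall u, a <= u -> u <= r -> forall m, 0 <= z m u) -> 0 <= c ->
  (forall u, a <= u -> u <= r -> c <= z j u) ->
  \int[mu]_(u in `[a, r]) (N%:R^-1 * (c * M l j u)) - \int[mu]_(u in `[a, r]) z l u
    <= z l r - z l a.
Proof.
move=> hz a0 ar zu c0 cz; have [ig ->] := hz l a r a0 ar.
have iz := continuous_integrable_itv (scalar_solution_continuous l hz a0 ar).
have ih : mu.-integrable `[a, r] (EFin \o (fun u => N%:R^-1 * (c * M l j u))).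
  by do 2 apply: integrableZl_EFin => //; exact: integrable_weight.
rewrite -RintegralB //; apply: le_Rintegral => //; first exact: integrableB_EFin.
move=> u /=; rewrite in_itv /= => /andP[au ur].
by apply: consensus_rhs_ge_arrow; [exact: le_trans au | exact: zu | | exact: cz].
Qed.
Arguments scalar_solution_increment_ge {z} l j {a r c}.

Lemma scalar_solution_decay z l s t : scalar_solution z -> 0 <= s -> s <= t ->
  (forall m, 0 <= z m s) -> expR (s - t) * z l s <= z l t.
Proof.
move=> hz s0 st zs.
have zu u : s <= u -> forall m, 0 <= z m u.
  by move=> su m; exact: scalar_solution_nonneg hz s0 zs u su m.
have := @gronwall_lower _ 1 (z l) (fun=> 0) s t ltr01 st
  (scalar_solution_continuous l hz s0 st) (fun _ _ _ => lexx 0).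
rewrite Rintegral_itv_cst // mul0r addr0 mul1r; apply.
  exact: continuous_integrable_itv (fun x => cvg_cst 0).
move=> a r sa ar rt; rewrite mul1r.
have := scalar_solution_increment_ge l l hz (le_trans s0 sa) ar _ (lexx 0) _.
under eq_Rintegral do rewrite mul0r mulr0.
apply=> u au _; apply: zu; exact: le_trans au.
Qed.
Arguments scalar_solution_decay {z} l {s t}.

Lemma scalar_solution_arrow_ge z l j w T c : scalar_solution z -> 0 <= w -> 0 < T ->
  (forall m, 0 <= z m w) -> 0 <= c -> c <= z j w ->
  c * expR (- (2 * T)) * (N%:R^-1 * \int[mu]_(u in `[w, w + T]) M l j u) <= z l (w + T).
Proof.
move=> hz w0 T0 zw c0 cz.
have wT : w <= w + T by rewrite lerDl ltW.
have zu u : w <= u -> forall m, 0 <= z m u.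
  by move=> wu m; exact: scalar_solution_nonneg hz w0 zw u wu m.
set c' := expR (- T) * c.
have c'0 : 0 <= c' by rewrite mulr_ge0 ?expR_ge0.
have c'z u : w <= u -> u <= w + T -> c' <= z j u.
  move=> wu uwT; apply: le_trans (scalar_solution_decay j hz w0 wu zw).
  by apply: ler_pM; rewrite ?expR_ge0 // ler_expR; lra.
have iM := integrable_weight l j w (w + T) w0.
have gr : expR (- T) * (z l w + \int[mu]_(u in `[w, w + T]) (N%:R^-1 * (c' * M l j u)))
    <= z l (w + T).
  have := @gronwall_lower _ 1 (z l) (fun u => N%:R^-1 * (c' * M l j u)) w (w + T) ltr01 wT
    (scalar_solution_continuous l hz w0 wT).
  rewrite mul1r (_ : w - (w + T) = - T); last by ring.
  apply.
  - move=> u wu _; rewrite mulr_ge0 ?invr_ge0 ?ler0n // mulr_ge0 //.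
    by have /andP[] := M_range l j u (le_trans w0 wu).
  - by do 2 apply: integrableZl_EFin => //.
  - move=> a r wa ar rT; rewrite mul1r.
    apply: (scalar_solution_increment_ge l j hz (le_trans w0 wa)) => //.
    + by move=> u au _; apply: zu; apply: le_trans au.
    + by move=> u au ur; apply: c'z; [exact: le_trans au | exact: le_trans rT].
apply: le_trans gr.
rewrite RintegralZl ?RintegralZl //; last exact: integrableZl_EFin.
have e2 : expR (- (2 * T)) = expR (- T) * expR (- T) by rewrite -expRD; congr expR; ring.
rewrite mulrDr [X in _ <= _ + X](_ : _ =
    c * expR (- (2 * T)) * (N%:R^-1 * \int[mu]_(u in `[w, w + T]) M l j u)).
  by rewrite lerDr mulr_ge0 ?expR_ge0.
by rewrite /c' e2; ring.
Qed.

Arguments scalar_solution_arrow_ge {z} l j {w T c}.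

Lemma scalar_solution_reachn_ge z s0 T A a (G : rel 'I_N) I :
  scalar_solution z -> 0 <= s0 -> 0 < T -> (forall m, 0 <= z m s0) ->
  0 <= A -> A <= z I s0 -> 0 <= a ->
  (forall (k : nat) l j, G l j ->
     a <= N%:R^-1 * \int[mu]_(u in `[s0 + k%:R * T, s0 + k%:R * T + T]) M l j u) ->
  forall k l, reachn G k l I -> A * a ^+ k * expR (- (2 * k%:R * T)) <= z l (s0 + k%:R * T).
Proof.
move=> hz s00 T0 zs A0 AI a0 Ga.
have zu u : s0 <= u -> forall m, 0 <= z m u.
  by move=> su m; exact: scalar_solution_nonneg hz s00 zs u su m.
elim=> [|k IH] l /=.
  by move=> /eqP ->; rewrite expr0 mulr1 !(mulr0, mul0r) addr0 oppr0 expR0 mulr1.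
case/existsP => j /andP[Glj /IH IHj].
set w := s0 + k%:R * T in IHj *.
have s0w : s0 <= w by rewrite /w lerDl mulr_ge0 // ltW.
have -> : s0 + k.+1%:R * T = w + T by rewrite /w -addn1 natrD mulrDl mul1r addrA.
set c := A * a ^+ k * expR (- (2 * k%:R * T)) in IHj *.
have c0 : 0 <= c by rewrite /c !mulr_ge0 ?exprn_ge0 ?expR_ge0.
apply: le_trans (scalar_solution_arrow_ge l j hz (le_trans s00 s0w) T0 (zu w s0w) c0 IHj).
have -> : A * a ^+ k.+1 * expR (- (2 * k.+1%:R * T)) = c * expR (- (2 * T)) * a.
  have -> : expR (- (2 * k.+1%:R * T)) = expR (- (2 * k%:R * T)) * expR (- (2 * T)).
    by rewrite -expRD -addn1 natrD; congr expR; ring.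
  by rewrite exprSr /c; ring.
by apply: ler_wpM2l (Ga k l j Glj); rewrite mulr_ge0 ?expR_ge0.
Qed.
Arguments scalar_solution_reachn_ge {z s0 T A a G I}.

Lemma scalar_solution_reach_ge z s0 T A a (G : rel 'I_N) I L :
  scalar_solution z -> 0 <= s0 -> 0 < T -> (forall m, 0 <= z m s0) ->
  0 <= A -> A <= z I s0 -> 0 <= a -> a <= 1 ->
  (forall (k : nat) l j, G l j ->
     a <= N%:R^-1 * \int[mu]_(u in `[s0 + k%:R * T, s0 + k%:R * T + T]) M l j u) ->
  (forall l, exists2 n, reachn G n l I & (n <= L)%N) ->
  forall l, A * a ^+ L * expR (- (2 * L%:R * T)) <= z l (s0 + L%:R * T).
Proof.
move=> hz s00 T0 zs A0 AI a0 a1 Ga GL l.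
have [n rn nL] := GL l.
have nLT : n%:R * T <= L%:R * T by rewrite ler_pM2r // ler_nat.
have s0n : s0 <= s0 + n%:R * T by rewrite lerDl mulr_ge0 // ltW.
have nL' : s0 + n%:R * T <= s0 + L%:R * T by rewrite lerD2l.
apply: le_trans (scalar_solution_decay l hz (le_trans s00 s0n) nL'
  (fun m => scalar_solution_nonneg hz s00 zs _ s0n m)).
have := scalar_solution_reachn_ge hz s00 T0 zs A0 AI a0 Ga n l rn.
move/(ler_wpM2l (expR_ge0 (s0 + n%:R * T - (s0 + L%:R * T)))); apply: le_trans.
have aLn : a ^+ L <= a ^+ n by apply: ler_wiXn2l.
have eLn : expR (- (2 * L%:R * T)) <=
    expR (s0 + n%:R * T - (s0 + L%:R * T)) * expR (- (2 * n%:R * T)).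
  by rewrite -expRD ler_expR; lra.
rewrite [X in _ <= X](_ : _ = A * a ^+ n *
    (expR (s0 + n%:R * T - (s0 + L%:R * T)) * expR (- (2 * n%:R * T)))); last by ring.
by apply: ler_pM; rewrite ?mulr_ge0 ?exprn_ge0 ?expR_ge0 // ler_wpM2l.
Qed.
Arguments scalar_solution_reach_ge {z s0 T A a G I L}.

Lemma spread_nonincreasing y t1 t2 : scalar_solution y -> 0 <= t1 -> t1 <= t2 ->
  spread y t2 <= spread y t1.
Proof.
move=> hy t10 t12.
have [imax ymax] := exists_argmax (fun i => y i t1) N_gt0.
have [imin ymin] := exists_argmin (fun i => y i t1) N_gt0.
rewrite (spread_extremal ymax ymin); apply: spread_le => [|i j].
  by rewrite subr_ge0; exact: le_trans (ymin imax) (ymax imax).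
by apply: lerB; [exact: scalar_solution_le hy t10 t12 ymax i |
  exact: scalar_solution_ge hy t10 t12 ymin j].
Qed.

Lemma scalar_solution_max_drop y s0 T a (G : rel 'I_N) I L lo hi :
  scalar_solution y -> 0 <= s0 -> 0 < T -> 0 <= a -> a <= 1 ->
  (forall (k : nat) l j, G l j ->
     a <= N%:R^-1 * \int[mu]_(u in `[s0 + k%:R * T, s0 + k%:R * T + T]) M l j u) ->
  (forall l, exists2 n, reachn G n l I & (n <= L)%N) ->
  lo <= hi -> (forall l, y l s0 <= hi) -> y I s0 <= 2^-1 * (hi + lo) ->
  forall l, y l (s0 + L%:R * T) <=
    hi - 2^-1 * a ^+ L * expR (- (2 * L%:R * T)) * (hi - lo).
Proof.
move=> hy s00 T0 a0 a1 Ga GL lohi yhi yI l.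
have z0 m : 0 <= -1 * y m s0 + hi by have := yhi m; lra.
have A0 : 0 <= 2^-1 * (hi - lo) by rewrite mulr_ge0 // subr_ge0.
have AI : 2^-1 * (hi - lo) <= -1 * y I s0 + hi by lra.
have := scalar_solution_reach_ge (scalar_solution_affine (-1) hi hy) s00 T0 z0
  A0 AI a0 a1 Ga GL l.
rewrite (_ : 2^-1 * (hi - lo) * a ^+ L * expR (- (2 * L%:R * T)) =
  2^-1 * a ^+ L * expR (- (2 * L%:R * T)) * (hi - lo)); last by ring.
lra.
Qed.
Arguments scalar_solution_max_drop {y s0 T a G I L lo hi}.

Lemma spread_contraction y s0 T a (G : rel 'I_N) I L :
  scalar_solution y -> 0 <= s0 -> 0 < T -> 0 <= a -> a <= 1 ->
  (forall (k : nat) l j, G l j ->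
     a <= N%:R^-1 * \int[mu]_(u in `[s0 + k%:R * T, s0 + k%:R * T + T]) M l j u) ->
  (forall l, exists2 n, reachn G n l I & (n <= L)%N) ->
  spread y (s0 + L%:R * T) <= (1 - 2^-1 * a ^+ L * expR (- (2 * L%:R * T))) * spread y s0.
Proof.
move=> hy s00 T0 a0 a1 Ga GL.
have [imax ymax] := exists_argmax (fun i => y i s0) N_gt0.
have [imin ymin] := exists_argmin (fun i => y i s0) N_gt0.
rewrite (spread_extremal ymax ymin).
set hi := y imax s0 in ymax *; set lo := y imin s0 in ymin *.
set t := s0 + L%:R * T; set c := 2^-1 * a ^+ L * expR (- (2 * L%:R * T)).
have lohi : lo <= hi := le_trans (ymin imax) (ymax imax).
have st : s0 <= t by rewrite lerDl mulr_ge0 // ltW.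
have c1 : c <= 1.
  rewrite /c -[X in _ <= X]mulr1 -mulrA ler_pM ?invr_ge0 ?mulr_ge0 ?exprn_ge0 ?expR_ge0 //.
    by rewrite invf_le1 // ler1n.
  rewrite -[X in _ <= X]mulr1 ler_pM ?exprn_ge0 ?expR_ge0 ?exprn_ile1 //.
  by rewrite expR_le1 oppr_le0 !mulr_ge0 // ltW.
apply: spread_le => [|i j]; first by rewrite mulr_ge0 ?subr_ge0.
have yhi l : y l t <= hi := scalar_solution_le hy s00 st ymax l.
have ylo l : lo <= y l t := scalar_solution_ge hy s00 st ymin l.
case: (leP (y I s0) (2^-1 * (hi + lo))) => yI.
  have := scalar_solution_max_drop hy s00 T0 a0 a1 Ga GL lohi ymax yI i.
  by have := ylo j; rewrite -/t -/c; lra.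
have drop : forall l, -1 * y l t + 0 <= - lo - c * (- lo - - hi).
  apply: (scalar_solution_max_drop (scalar_solution_affine (-1) 0 hy) s00 T0 a0 a1 Ga GL).
  - by rewrite lerN2.
  - by move=> l; have := ymin l; lra.
  - lra.
by have := drop j; have := yhi i; lra.
Qed.

Lemma consensus_rhs_norm_le y i u : 0 <= u ->
  `|consensus_rhs y i u| <= (N%:R - 1) / N%:R * spread y u.
Proof.
move=> u0.
have sum_le : `|\sum_(l < N) M i l u * (y l u - y i u)| <= (N%:R - 1) * spread y u.
  rewrite (bigD1 i) //= subrr mulr0 add0r.
  apply: le_trans (ler_norm_sum _ _ _) _.
  have -> : (N%:R - 1) * spread y u = \sum_(l < N | l != i) spread y u.
    have : \sum_(l < N) spread y u = spread y u + \sum_(l < N | l != i) spread y u.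
      by rewrite (bigD1 i).
    by rewrite sumr_const card_ord -mulr_natr; lra.
  apply: ler_sum => l _; rewrite normrM.
  have /andP[M0 M1] := M_range i l u u0.
  rewrite ger0_norm // -[X in _ <= X]mul1r ler_pM //.
  by rewrite ler_norml; have := spread_ge y u l i; have := spread_ge y u i l; lra.
rewrite /consensus_rhs normrM ger0_norm ?invr_ge0 ?ler0n //.
have -> : (N%:R - 1) / N%:R * spread y u = N%:R^-1 * ((N%:R - 1) * spread y u) by ring.
by rewrite ler_wpM2l ?invr_ge0 ?ler0n.
Qed.

Lemma spread_increment_ge y a r : scalar_solution y -> 0 <= a -> a <= r ->
  - (2 * ((N%:R - 1) / N%:R) * \int[mu]_(u in `[a, r]) spread y u) <=
    spread y r - spread y a.
Proof.
move=> hy a0 ar; set k := 2 * ((N%:R - 1) / N%:R).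
have [imax ymax] := exists_argmax (fun i => y i a) N_gt0.
have [imin ymin] := exists_argmin (fun i => y i a) N_gt0.
have [imax_int imax_eq] := hy imax a r a0 ar.
have [imin_int imin_eq] := hy imin a r a0 ar.
have spread_int : mu.-integrable `[a, r] (EFin \o spread y).
  apply: continuous_integrable_itv; apply: spread_continuous => i.
  exact: scalar_solution_continuous.
rewrite (spread_extremal ymax ymin) -mulNr -RintegralZl //.
apply: le_trans (_ : \int[mu]_(u in `[a, r])
    (consensus_rhs y imax u - consensus_rhs y imin u) <= _).
  apply: le_Rintegral => //.
  - exact: integrableZl_EFin.
  - exact: integrableB_EFin.
  move=> u /=; rewrite in_itv /= => /andP[au _].
  have := consensus_rhs_norm_le y imax u (le_trans a0 au).
  have := consensus_rhs_norm_le y imin u (le_trans a0 au).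
  rewrite /k !ler_norml; lra.
rewrite RintegralB // -imax_eq -imin_eq.
by have := spread_ge y r imax imin; lra.
Qed.

Lemma spread_backward y t1 t2 : (1 < N)%N -> scalar_solution y -> 0 <= t1 -> t1 <= t2 ->
  spread y t1 <= expR (2 * ((N%:R - 1) / N%:R) * (t2 - t1)) * spread y t2.
Proof.
move=> N1 hy t10 t12; set k := 2 * ((N%:R - 1) / N%:R).
have k0 : 0 < k by rewrite mulr_gt0 // divr_gt0 ?subr_gt0 ?ltr1n ?ltr0n.
have decay : expR (k * (t1 - t2)) * spread y t1 <= spread y t2.
  have := @gronwall_lower _ k (spread y) (fun=> 0) t1 t2 k0 t12
    (spread_continuous (fun i => scalar_solution_continuous i hy t10 t12)) (fun _ _ _ => lexx 0).
  rewrite Rintegral_itv_cst // mul0r addr0; apply.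
    exact: continuous_integrable_itv (fun x => cvg_cst 0).
  move=> a r t1a ar rt2; rewrite Rintegral_itv_cst // mul0r sub0r.
  exact: spread_increment_ge (le_trans t10 t1a) ar.
have -> : spread y t1 = expR (k * (t2 - t1)) * (expR (k * (t1 - t2)) * spread y t1).
  by rewrite mulrA -expRD (_ : k * (t2 - t1) + k * (t1 - t2) = 0) ?expR0 ?mul1r //; ring.
by rewrite ler_wpM2l ?expR_ge0.
Qed.


End scalar_consensus.
Arguments spread_contraction {R N M} N_gt0 M_range M_meas {y s0 T a G I L}.
Arguments spread_nonincreasing {R N M} N_gt0 M_range {y t1 t2}.
Arguments spread_backward {R N M} N_gt0 M_range {y t1 t2}.

(** * From scalar projections back to [R^d] *)

Section finite_sums.
Context {R : realType}.
Local Notation mu := (@lebesgue_measure R).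

Lemma cauchy_schwarz_sum n (f g : 'I_n -> R) :
  \sum_(k < n) f k * g k <=
    Num.sqrt (\sum_(k < n) f k ^+ 2) * Num.sqrt (\sum_(k < n) g k ^+ 2).
Proof.
set A := \sum_(k < n) f k ^+ 2; set B := \sum_(k < n) g k ^+ 2.
set P := \sum_(k < n) f k * g k.
have lagrange : 2 * (A * B - P ^+ 2) =
    \sum_(i < n) \sum_(j < n) (f i * g j - f j * g i) ^+ 2.
  have eAB : A * B = \sum_(i < n) \sum_(j < n) (f i ^+ 2 * g j ^+ 2).
    by rewrite mulr_suml; apply: eq_bigr => i _; rewrite mulr_sumr.
  have eBA : A * B = \sum_(i < n) \sum_(j < n) (f j ^+ 2 * g i ^+ 2).
    rewrite mulrC mulr_suml; apply: eq_bigr => i _; rewrite mulr_sumr.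
    by apply: eq_bigr => j _; rewrite mulrC.
  have ePP : P ^+ 2 = \sum_(i < n) \sum_(j < n) (f i * g i * (f j * g j)).
    by rewrite expr2 mulr_suml; apply: eq_bigr => i _; rewrite mulr_sumr.
  have -> : 2 * (A * B - P ^+ 2) = A * B + A * B - 2 * P ^+ 2 by ring.
  rewrite {1}eAB eBA ePP -big_split /= mulr_sumr -sumrB; apply: eq_bigr => i _.
  rewrite -big_split /= mulr_sumr -sumrB; apply: eq_bigr => j _.
  by ring.
have P2AB : P ^+ 2 <= A * B.
  have : 0 <= \sum_(i < n) \sum_(j < n) (f i * g j - f j * g i) ^+ 2.
    by apply: sumr_ge0 => i _; apply: sumr_ge0 => j _; exact: sqr_ge0.
  by rewrite -lagrange pmulr_rge0 // subr_ge0.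
have A0 : 0 <= A by apply: sumr_ge0 => k _; exact: sqr_ge0.
have B0 : 0 <= B by apply: sumr_ge0 => k _; exact: sqr_ge0.
rewrite -sqrtrM //; apply: le_trans (ler_norm P) _.
by rewrite -sqrtr_sqr ler_sqrt ?mulr_ge0.
Qed.

Lemma integrable_sum_EFin (D : set R) (I : Type) (s : seq I) (F : I -> R -> R) :
  measurable D -> (forall i, mu.-integrable D (EFin \o F i)) ->
  mu.-integrable D (EFin \o (fun u => \sum_(i <- s) F i u)).
Proof.
move=> mD iF.
have -> : EFin \o (fun u => \sum_(i <- s) F i u) = (fun u => \sum_(i <- s) (EFin \o F i) u)%E.
  by apply/funext => u; rewrite /= sumEFin.
exact: integrable_sum.
Qed.

Lemma Rintegral_sum (D : set R) (I : Type) (s : seq I) (F : I -> R -> R) :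
  measurable D -> (forall i, mu.-integrable D (EFin \o F i)) ->
  \int[mu]_(u in D) (\sum_(i <- s) F i u) = \sum_(i <- s) \int[mu]_(u in D) F i u.
Proof.
move=> mD iF; elim: s => [|i s IH].
  by under eq_Rintegral do rewrite big_nil; rewrite big_nil Rintegral_cst // mul0r.
under eq_Rintegral do rewrite big_cons.
by rewrite RintegralD ?big_cons ?IH //; exact: integrable_sum_EFin.
Qed.

End finite_sums.

Section projections.
Context {R : realType} {N d : nat}.
Local Notation mu := (@lebesgue_measure R).
Implicit Types (x : 'I_N -> R -> 'rV[R]_d) (v : 'rV[R]_d).

Definition projection x v : 'I_N -> R -> R :=
  fun l u => \sum_(k < d) v ord0 k * x l u ord0 k.

Lemma consensus_rhs_projection (M : 'I_N -> 'I_N -> R -> R) x v i u :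
  consensus_rhs M (projection x v) i u = \sum_(k < d) v ord0 k *
    (N%:R^-1 * \sum_(j < N) M i j u * (x j u ord0 k - x i u ord0 k)).
Proof.
under [RHS]eq_bigr do rewrite mulrCA.
rewrite -mulr_sumr /consensus_rhs; congr (_ * _).
under [RHS]eq_bigr do rewrite mulr_sumr.
rewrite exchange_big /=; apply: eq_bigr => j _.
by rewrite /projection -sumrB mulr_sumr; apply: eq_bigr => k _; ring.
Qed.

Lemma projection_solution (M : 'I_N -> 'I_N -> R -> R) x v :
  is_solution M x -> scalar_solution M (projection x v).
Proof.
move=> hx; apply: scalar_solution_of_primitive => i t t0.
have -> : consensus_rhs M (projection x v) i = fun u => \sum_(k < d) v ord0 k *
    (N%:R^-1 * \sum_(j < N) M i j u * (x j u ord0 k - x i u ord0 k)).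
  by apply/funext => u; exact: consensus_rhs_projection.
have int_k k := integrableZl_EFin (v ord0 k) (measurable_itv `[0, t]) (hx i k t t0).1.
split; first exact: integrable_sum_EFin.
rewrite Rintegral_sum // /projection -big_split /=; apply: eq_bigr => k _.
have [_ /= ->] := hx i k t t0.
by rewrite [in RHS]RintegralZl ?mulrDr //; case: (hx i k t t0).
Qed.

Lemma enorm_ge0 v : 0 <= enorm v.
Proof. exact: sqrtr_ge0. Qed.

Lemma enorm_le_diam x t i j : enorm (x i t - x j t) <= diam x t.
Proof.
apply: le_trans (le_bigmax _ _ i).
exact: (le_bigmax _ (fun j => enorm (x i t - x j t)) j).
Qed.

Lemma projection_sub_le x v t i j :
  projection x v i t - projection x v j t <= enorm v * enorm (x i t - x j t).
Proof.
rewrite /projection /enorm -sumrB.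
under eq_bigr do rewrite -mulrBr.
under [in X in _ <= _ * X]eq_bigr do rewrite !mxE.
exact: cauchy_schwarz_sum.
Qed.

(* Testing against [v = x_i t1 - x_j t1] turns [|v|^2] into a difference of
   projections at [t1]; Cauchy-Schwarz bounds the projections at [t2]. *)
Lemma diam_le_of_spread x t1 t2 F : (0 < N)%N -> 0 <= F ->
  (forall v, spread (projection x v) t1 <= F * spread (projection x v) t2) ->
  diam x t1 <= F * diam x t2.
Proof.
move=> N0 F0 H.
have d0 : 0 <= diam x t2.
  exact: le_trans (enorm_ge0 _) (enorm_le_diam x t2 (Ordinal N0) (Ordinal N0)).
apply: bigmax_le => [|i _]; first exact: mulr_ge0.
apply: bigmax_le => [|j _]; first exact: mulr_ge0.
set v := x i t1 - x j t1; have v0 := enorm_ge0 v.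
have norm_sqr : enorm v ^+ 2 = projection x v i t1 - projection x v j t1.
  rewrite /enorm sqr_sqrtr; last by apply: sumr_ge0 => k _; exact: sqr_ge0.
  by rewrite /projection -sumrB; apply: eq_bigr => k _; rewrite -mulrBr expr2 /v !mxE.
have : enorm v ^+ 2 <= enorm v * (F * diam x t2).
  rewrite norm_sqr; apply: le_trans (spread_ge _ t1 i j) _.
  apply: le_trans (H v) _; rewrite mulrCA ler_wpM2l //.
  apply: spread_le => [|a b]; first exact: mulr_ge0.
  by apply: le_trans (projection_sub_le x v t2 a b) _; rewrite ler_wpM2l ?enorm_le_diam.
have := mulr_ge0 F0 d0; nra.
Qed.

End projections.
Arguments projection_solution {R N d M x} v.
Arguments diam_le_of_spread {R N d x t1 t2 F}.

Lemma conn_arrow_weight_ge {R : realType} {N : nat} (M : 'I_N -> 'I_N -> R -> R)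
    (T mu t a : R) i j :
  0 < T -> a <= mu * T / N%:R -> conn_arrow M T mu t i j ->
  a <= N%:R^-1 * \int[@lebesgue_measure R]_(u in `[t, t + T]) M i j u.
Proof.
move=> T0 a_le arrow; apply: le_trans a_le _; rewrite mulrC ler_wpM2l ?invr_ge0 ?ler0n //.
by rewrite -ler_pdivlMr // mulrC.
Qed.

Section consensus_rate.
Context {R : realType} {N d : nat} {M : 'I_N -> 'I_N -> R -> R} {x : 'I_N -> R -> 'rV[R]_d}.
Context {T mu : R} {Gs : rel 'I_N} {I : 'I_N} {dstar : nat}.
Hypothesis N_ge2 : (2 <= N)%N.
Hypothesis M_meas : forall i j, measurable_fun (`[0%R, +oo[%classic : set R) (M i j).
Hypothesis M_range : forall i j t, 0 <= t -> 0 <= M i j t <= 1.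
Hypothesis x_sol : is_solution M x.
Hypotheses (T_gt0 : 0 < T) (mu_gt0 : 0 < mu).
Hypothesis Gs_arrow : forall (k : nat) i j, Gs i j -> conn_arrow M T mu (k%:R * T) i j.
Hypothesis Gs_length : is_length Gs I dstar.

Local Notation tau := (dstar%:R * T).
Local Notation rate := (mu * T / (N%:R + mu * T)).
Local Notation C := (1 - 2^-1 * rate ^+ dstar * expR (- 2 * dstar%:R * T)).

Let N_gt0 : (0 < N)%N. Proof. exact: leq_trans N_ge2. Qed.

Let rate_ge0 : 0 <= rate.
Proof. by rewrite divr_ge0 ?addr_ge0 ?mulr_ge0 ?ler0n // ltW. Qed.

Let rate_le1 : rate <= 1.
Proof. by rewrite ler_pdivrMr ?mul1r ?lerDr ?ler0n // ltr_wpDl ?ler0n ?mulr_gt0. Qed.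

Let rate_le : rate <= mu * T / N%:R.
Proof.
have N0 : 0 < N%:R :> R by rewrite ltr0n.
apply: ler_wpM2l; first by rewrite mulr_ge0 ?ltW.
by rewrite lef_pV2 ?posrE ?addr_gt0 ?mulr_gt0 // lerDl mulr_ge0 ?ltW.
Qed.

Let reach_within l : exists2 n, reachn Gs n l I & (n <= dstar)%N.
Proof. by have [n [[rn _] nL]] := Gs_length.1 l; exists n. Qed.

Let C_ge0 : 0 <= C.
Proof.
have : rate ^+ dstar * expR (- 2 * dstar%:R * T) <= 1.
  rewrite -[X in _ <= X]mulr1; apply: ler_pM; rewrite ?exprn_ge0 ?expR_ge0 ?exprn_ile1 //.
  by rewrite expR_le1 !mulNr oppr_le0 !mulr_ge0 // ltW.
by rewrite -mulrA; lra.
Qed.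

Let tau_ge0 n : 0 <= n%:R * tau.
Proof. by rewrite !mulr_ge0 // ltW. Qed.

Lemma diam_period n : diam x (n.+1%:R * tau) <= C * diam x (n%:R * tau).
Proof.
refine (diam_le_of_spread N_gt0 C_ge0 _) => v.
rewrite (_ : n.+1%:R * tau = n%:R * tau + dstar%:R * T); last by rewrite -addn1 natrD; ring.
rewrite !mulNr; apply: (spread_contraction N_gt0 M_range M_meas (projection_solution v x_sol)
  (tau_ge0 n) T_gt0 rate_ge0 rate_le1 _ reach_within).
move=> k l j /(Gs_arrow (n * dstar + k)); rewrite natrD natrM mulrDl -mulrA.
exact: conn_arrow_weight_ge T_gt0 rate_le.
Qed.

Lemma diam_geometric n : diam x (n%:R * tau) <= C ^+ n * diam x 0.
Proof.
elim: n => [|n IH]; first by rewrite mul0r expr0 mul1r.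
apply: le_trans (le_trans (diam_period n) (ler_wpM2l C_ge0 IH)) _.
by rewrite exprS mulrA.
Qed.

Lemma diam_within_period n t : 0 <= t -> diam x (n%:R * tau + t) <= diam x (n%:R * tau).
Proof.
move=> t0; rewrite -[X in _ <= X]mul1r; refine (diam_le_of_spread N_gt0 ler01 _) => v.
rewrite mul1r; apply: (spread_nonincreasing N_gt0 M_range (projection_solution v x_sol)).
  exact: tau_ge0.
by rewrite lerDl.
Qed.

Lemma diam_within_period_backward n t : 0 <= t -> t <= tau ->
  diam x (n%:R * tau + t) <=
    expR (2 * ((N%:R - 1) / N%:R) * (tau - t)) * diam x (n.+1%:R * tau).
Proof.
move=> t0 t_tau; refine (diam_le_of_spread N_gt0 (expR_ge0 _) _) => v.
have := spread_backward N_gt0 M_range N_ge2 (projection_solution v x_sol)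
  (addr_ge0 (tau_ge0 n) t0) (_ : _ <= n.+1%:R * tau).
rewrite (_ : n.+1%:R * tau - (n%:R * tau + t) = tau - t); last by rewrite -addn1 natrD; ring.
by apply; rewrite -addn1 natrD mulrDl mul1r lerD2l.
Qed.

End consensus_rate.

Theorem theorem1 (R : realType) (N d : nat) (HN : (2 <= N)%N) (Hd : (1 <= d)%N)
  (M : 'I_N -> 'I_N -> R -> R)
  (HMmeas : forall i j, measurable_fun (`[0%R, +oo[%classic : set R) (M i j))
  (HMrange : forall i j t, 0 <= t -> 0 <= M i j t <= 1)
  (x : 'I_N -> R -> 'rV[R]_d)
  (Hsol : is_solution M x)
  (T mu : R) (HT : 0 < T) (Hmu : 0 < mu)
  (Gs : rel 'I_N) (I : 'I_N) (dstar : nat)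
  (HGs : forall (k : nat) (i j : 'I_N), Gs i j -> conn_arrow M T mu (k%:R * T) i j)
  (HI : globally_reachable Gs I)
  (Hdstar : is_length Gs I dstar) :
  let tau := dstar%:R * T in
  let C := 1 - 2^-1 * (mu * T / (N%:R + mu * T)) ^+ dstar * expR (- 2 * dstar%:R * T) in
  let delta := - (N%:R / (2 * (N%:R - 1))) * ln C in
  let phi := fun t : R =>
    if t <= tau - delta then 1 else C * expR (2 * ((N%:R - 1) / N%:R) * (tau - t)) in
  (forall n : nat, diam x (n%:R * tau) <= C ^+ n * diam x 0) /\
  (forall (t : R) (n : nat), 0 <= t <= tau ->
     diam x (n%:R * tau + t) <= phi t * C ^+ n * diam x 0).
Proof.
move=> tau C delta phi.
(* Both estimates hold on all of [0, tau]; [delta] only selects the better one. *)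
have geometric := diam_geometric HN HMmeas HMrange Hsol HT Hmu HGs Hdstar.
split => // t n /andP[t0 t_tau]; rewrite /phi; case: ifP => _.
  by rewrite mul1r; exact: le_trans (diam_within_period HN HMrange Hsol HT n t t0) (geometric n).
apply: le_trans (diam_within_period_backward HN HMrange Hsol HT n t t0 t_tau) _.
apply: le_trans (ler_wpM2l (expR_ge0 _) (geometric n.+1)) _.
by rewrite [leRHS](_ : _ = expR (2 * ((N%:R - 1) / N%:R) * (tau - t)) * (C ^+ n.+1 * diam x 0))
  ?lexx // /tau /C exprS; ring.
Qed.
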